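(* Let $\Gamma$ be a connected $\mathbb Z$-leg-weighted graph. Then the set of cones $\{c_w : w\in W(\Gamma)\}$ is finite.
   Context: A graph consists of finite sets $V$ (vertices) and $H$ (half-edges), a map $\mathrm{end}\colon H\to V$, an involution $i$ of $H$, a genus $g\colon V\to\mathbb Z_{\ge0}$ and an integer twist $k$. Legs are fixed points of $i$; edges are pairs $\{h,i(h)\}$, $h\ne i(h)$; a directed edge is a non-leg half-edge $h$ from $\mathrm{end}(h)$ to $\mathrm{end}(i(h))$. $\mathrm{val}(v)$ is the number of non-leg half-edges at $v$, $\kappa(v)=2g(v)-2+\mathrm{val}(v)$, and $g(\Gamma)=b_1(\Gamma)+\sum_v g(v)$. A cycle is a closed walk of directed edges repeating no vertex or undirected edge. A weighting is $w\colon H\to\mathbb Z$ with $w(h)+w(i(h))=0$ for $h\ne i(h)$ and $\sum_{\mathrm{end}(h)=v}w(h)+k\kappa(v)=0$ for all $v$. A leg-weighted graph has given integer values on the legs summing to $-k(2g(\Gamma)-2)$; $W(\Gamma)$ is the set of weightings restricting to these values. For a directed edge $e$ of a cycle $\gamma$, $w_\gamma(e)$ is the value of $w$ on the half-edge of $e$ at its source. For $E$ the edge set, $c_w\subseteq\mathbb Q_{\ge0}^E$ is the cone of $t$ with $\sum_{e\in\gamma}w_\gamma(e)t(e)=0$ for every cycle $\gamma$. *)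

From mathcomp Require Import all_boot all_order all_algebra.
Set Implicit Arguments. Unset Strict Implicit. Unset Printing Implicit Defensive.
Import Order.TTheory GRing.Theory Num.Theory.
Local Open Scope ring_scope.

(* A graph: finite types V (vertices) and H (half-edges), endv : H -> V,
   an involution inv of H, genus gen : V -> nat, twist k : int.
   Legs are fixed points of inv. *)
Section Graph.
Variables (V H : finType) (endv : H -> V) (inv : H -> H) (gen : V -> nat) (k : int).

Definition is_leg (h : H) : bool := inv h == h.

Definition edge_of (h : H) : {set H} := [set h; inv h].

Definition edgeset : {set {set H}} := [set edge_of h | h in H & ~~ is_leg h].

Definition edgeT := {e : {set H} | e \in edgeset}.

Definition adj : rel V :=
  fun u v => [exists h, ~~ is_leg h && (endv h == u) && (endv (inv h) == v)].

Definition connected_graph : Prop := forall u v : V, connect adj u v.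

Definition n_components : nat := n_comp (connect adj) predT.

Definition betti1 : int := (#|edgeset|%:Z - #|V|%:Z + (n_components)%:Z).

Definition graph_genus : int := betti1 + \sum_(v : V) (gen v)%:Z.

Definition val (v : V) : nat := #|[set h | (endv h == v) && ~~ is_leg h]|.

Definition kappa (v : V) : int := 2 * (gen v)%:Z - 2 + (val v)%:Z.

Definition leg_weighted (lw : H -> int) : Prop :=
  \sum_(h | is_leg h) lw h = - (k * (2 * graph_genus - 2)).

Definition weighting (w : H -> int) : Prop :=
  (forall h, ~~ is_leg h -> w h + w (inv h) = 0) /\
  (forall v : V, \sum_(h | endv h == v) w h + k * kappa v = 0).

Definition in_W (lw : H -> int) (w : H -> int) : Prop :=
  weighting w /\ forall h, is_leg h -> w h = lw h.

(* A cycle: a nonempty closed walk of directed edges (non-leg half-edges)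
   h_1, ..., h_n, where h_j goes from endv h_j to endv (inv h_j), with
   endv (inv h_j) = endv h_{j+1} (indices cyclic), repeating no vertex and no
   undirected edge. *)
Definition is_cycle (c : seq H) : Prop :=
  if c is h0 :: _ then
    [/\ all (fun h => ~~ is_leg h) c,
        forall j, (j < size c)%N ->
          endv (inv (nth h0 c j)) = endv (nth h0 c (j.+1 %% size c)),
        uniq (map endv c)
      & uniq (map edge_of c)]
  else False.

(* value of t : Q^E at the edge of a half-edge (0 off edges, never used on cycles) *)
Definition tval (t : edgeT -> rat) (h : H) : rat :=
  oapp t 0 (insub (edge_of h) : option edgeT).

Definition cone (w : H -> int) (t : edgeT -> rat) : Prop :=
  (forall e, 0 <= t e) /\
  (forall c, is_cycle c -> \sum_(h <- c) (w h)%:~R * tval t h = 0).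

End Graph.

From Pilot Require Import Defs.
From mathcomp Require Import all_boot all_order all_algebra zify.
Import Order.TTheory GRing.Theory Num.Theory.
Set Implicit Arguments. Unset Strict Implicit. Unset Printing Implicit Defensive.
Local Open Scope ring_scope.

(* If [t] lies in [c_w] and [t] does not vanish on an edge, then [|w| <= B] on
   both half-edges of that edge, where [B] is the sum of the [|k kappa(v)|] and
   of the absolute leg weights.  Hence [c_w] only depends on the restriction of
   [w] to the half-edges where [|w| <= B], and there are finitely many such
   restrictions.
   To bound [w(h)] when [t(h) > 0], let [U] be the set of vertices reachable
   from the head of [h] along half-edges [h'] with [t(h') = 0] or [w(h') > 0].
   If the tail of [h] were in [U], closing such a walk with [h] would give a
   cycle with [sum w t > 0].  Otherwise, summing the vertex conditions over [U]
   cancels the edges inside [U]; the half-edges leaving [U] all have weight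
   [<= 0] and one of them is [inv h], of weight [-w(h)], so [w(h) <= B].
   Neither connectedness nor the value of the leg sum is needed. *)

Lemma modn_addn2_id_leq2 (i n : nat) : (i < n)%N -> i = (i.+2 %% n)%N -> (n <= 2)%N.
Proof.
move=> lt_in i_eq; case: (leqP n 2) => // n_gt2.
case: (ltnP i.+2 n) => [lt_i2n | le_ni2]; first by rewrite modn_small in i_eq; lia.
suff : (i.+2 %% n = i.+2 - n)%N by lia.
by rewrite -[in LHS](subnK le_ni2) modnDr modn_small //; lia.
Qed.

Lemma nth_rcons_modS (T : Type) (x0 a : T) (s : seq T) (j : nat) : (j <= size s)%N ->
  nth x0 (rcons s a) j = nth x0 (a :: s) (j.+1 %% (size s).+1).
Proof.
rewrite nth_rcons leq_eqVlt => /orP [/eqP -> | lt_js]; first by rewrite ltnn eqxx modnn.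
by rewrite lt_js modn_small.
Qed.

Lemma ler_sum_norm_sub (R : realDomainType) (I : finType) (P Q : pred I) (f : I -> R) :
  (forall i, P i -> Q i) -> \sum_(i | P i) f i <= \sum_(i | Q i) `|f i|.
Proof.
move=> PQ; rewrite big_mkcond [leRHS]big_mkcond; apply: ler_sum => i _.
by case: (boolP (P i)) => [/PQ -> | _]; [exact: ler_norm | case: (Q i)].
Qed.

Lemma finite_classes_of_key (X Y : Type) (K : finType) (P : X -> Prop)
    (F : X -> Y -> Prop) (key : X -> K) :
  (forall x1 x2, P x1 -> P x2 -> key x1 = key x2 -> forall y, F x1 y -> F x2 y) ->
  exists n (cs : 'I_n -> Y -> Prop),
    forall x, P x -> exists i, forall y, F x y <-> cs i y.
Proof.
move=> keyF; exists #|K|, (fun i y => exists2 x, P x /\ key x = enum_val i & F x y).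
move=> x Px; exists (enum_rank (key x)) => y; split.
  by exists x; rewrite ?enum_rankK.
by case=> x' [Px' key_x'] Fx'; apply: keyF Px' Px _ _ Fx'; rewrite key_x' enum_rankK.
Qed.

Definition window (B : nat) (z : int) : option 'I_B.*2.+1 :=
  if `|z| <= B%:Z then Some (inord (absz (z + B%:Z))) else None.

Lemma window_inj (B : nat) (a b : int) :
  `|a| <= B%:Z -> window B a = window B b -> a = b.
Proof.
rewrite /window => a_le; rewrite a_le; case: ifP => // b_le [] /(congr1 val) /=.
by rewrite !inordK; lia.
Qed.

Section Graph.
Variables (V H : finType) (endv : H -> V) (inv : H -> H).
Hypothesis inv_invol : involutive inv.

Notation leg := (is_leg inv).
Notation tval := (@Defs.tval H inv).

Lemma is_leg_inv h : leg (inv h) = leg h.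
Proof. by rewrite /is_leg inv_invol eq_sym. Qed.

Lemma edge_of_inv h : edge_of inv (inv h) = edge_of inv h.
Proof. by rewrite /edge_of inv_invol setUC. Qed.

Lemma edge_of_eq h h' : edge_of inv h = edge_of inv h' -> h' = h \/ h' = inv h.
Proof.
move=> edge_eq; have : h' \in edge_of inv h by rewrite edge_eq /edge_of !inE eqxx.
by rewrite /edge_of !inE => /orP [] /eqP; auto.
Qed.

Lemma tval_inv t h : tval t (inv h) = tval t h.
Proof. by rewrite /Defs.tval edge_of_inv. Qed.

Lemma tval_ge0 t : (forall e, 0 <= t e) -> forall h, 0 <= tval t h.
Proof. by move=> t_ge0 h; rewrite /Defs.tval; case: insub. Qed.

Definition closed_walk (x0 : H) (c : seq H) : Prop :=
  forall j, (j < size c)%N ->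
    endv (inv (nth x0 c j)) = endv (nth x0 c (j.+1 %% size c)).

Lemma closed_walk_next_index x0 c a b :
  uniq (map endv c) -> closed_walk x0 c -> a \in c -> b \in c ->
  endv (inv a) = endv b -> index b c = ((index a c).+1 %% size c)%N.
Proof.
move=> uniq_vc walk_c ac bc ab.
have ia := ac; rewrite -index_mem in ia.
have ib := bc; rewrite -index_mem in ib.
have next_lt : ((index a c).+1 %% size c < size c)%N by rewrite ltn_pmod // (leq_trans _ ia).
apply/eqP; rewrite -(nth_uniq (endv x0) _ _ uniq_vc) ?size_map //.
by rewrite !(nth_map x0) // -walk_c // !nth_index // ab.
Qed.

Lemma closed_walk_uniq_edges x0 c :
  all (fun h => ~~ leg h) c -> uniq (map endv c) -> closed_walk x0 c ->
  uniq (map (edge_of inv) c) \/ exists a, c = [:: a; inv a].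
Proof.
move=> nleg_c uniq_vc walk_c; have uniq_c := map_uniq uniq_vc.
have [/hasP [a ac iac] | /hasPn no_twin] := boolP (has (fun a => inv a \in c) c); last first.
  left; rewrite map_inj_in_uniq // => a b ac bc /edge_of_eq [] // ba.
  by move: (no_twin a ac); rewrite -ba bc.
right; have a_nleg : inv a != a := allP nleg_c a ac.
have next_a := closed_walk_next_index uniq_vc walk_c ac iac erefl.
have next_ia := closed_walk_next_index uniq_vc walk_c iac ac.
rewrite inv_invol next_a -addn1 modnDml addn1 in next_ia.
have /modn_addn2_id_leq2 /(_ (next_ia erefl)) : (index a c < size c)%N by rewrite index_mem.
case: c {nleg_c uniq_vc walk_c next_a next_ia} uniq_c ac iac => [|x [|y [|z s]]] //=.
  by rewrite !inE => _ /eqP ax /eqP iax; move: a_nleg; rewrite iax ax eqxx.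
rewrite !inE andbT => x_ne_y /orP [] /eqP ax /orP [] /eqP iax _.
- by move: a_nleg; rewrite iax ax eqxx.
- by exists a; rewrite iax ax.
- by exists (inv a); rewrite inv_invol iax ax.
- by move: a_nleg; rewrite iax ax eqxx.
Qed.

Definition step_rel (good : pred H) : rel V :=
  fun x y => [exists h, [&& good h, endv h == x & endv (inv h) == y]].

Lemma path_step_rel good x p : path (step_rel good) x p ->
  exists2 hs, all good hs &
    map endv hs = belast x p /\ map (fun h => endv (inv h)) hs = p.
Proof.
elim: p x => [|y p IHp] x /=; first by exists [::].
move=> /andP [/existsP [h /and3P [good_h /eqP hx /eqP hy]] /IHp [hs good_hs [tails heads]]].
by exists (h :: hs); rewrite /= ?good_h ?hx ?hy ?tails ?heads.
Qed.

Lemma closed_walk_of_path h0 hs p (v := endv (inv h0)) :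
  map endv hs = belast v p -> map (fun h => endv (inv h)) hs = p ->
  endv h0 = last v p -> closed_walk h0 (h0 :: hs).
Proof.
move=> tails heads h0_last j lt_j.
have size_hs : size hs = size p by rewrite -heads size_map.
have lt_next : (j.+1 %% size (h0 :: hs) < size (h0 :: hs))%N by rewrite ltn_pmod.
rewrite -(nth_map h0 v (fun h => endv (inv h)) lt_j) -(nth_map h0 v endv lt_next).
by rewrite /= heads tails h0_last lastI nth_rcons_modS size_belast -?size_hs.
Qed.

Lemma cycle_of_connect (good : pred H) h0 :
  (forall h, good h -> ~~ leg h) -> ~~ leg h0 -> ~~ good (inv h0) ->
  connect (step_rel good) (endv (inv h0)) (endv h0) ->
  exists2 hs, all good hs & is_cycle endv inv (h0 :: hs).
Proof.
move=> good_nleg nleg0 bad_inv0 /connectP [p0 path_p0 h0_last0].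
case: (shortenP path_p0) h0_last0 => p path_p uniq_p _ h0_last.
have [hs good_hs [tails heads]] := path_step_rel path_p.
exists hs => //.
have nleg_c : all (fun h => ~~ leg h) (h0 :: hs).
  by rewrite /= nleg0; apply/allP => h /(allP good_hs) /good_nleg.
have walk_c := closed_walk_of_path tails heads h0_last.
have uniq_vc : uniq (map endv (h0 :: hs)).
  by move: uniq_p; rewrite lastI rcons_uniq /= h0_last tails.
split => //; case: (closed_walk_uniq_edges nleg_c uniq_vc walk_c) => // - [a [h0a hs_eq]].
by move: good_hs; rewrite hs_eq -h0a /= (negbTE bad_inv0).
Qed.

Variables (gen : V -> nat) (k : int) (lw : H -> int).

Notation kappa := (kappa endv inv gen).
Notation in_W := (in_W endv inv gen k lw).

Lemma weighting_inv w h : weighting endv inv gen k w -> ~~ leg h -> w (inv h) = - w h.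
Proof. by move=> [w_inv _] nleg; apply/eqP; rewrite -addr_eq0 addrC w_inv. Qed.

Definition leaves (U : {set V}) (h : H) : bool :=
  [&& endv h \in U, ~~ leg h & endv (inv h) \notin U].

Lemma sum_inner_antisym_eq0 (w : H -> int) (U : {set V}) :
  (forall h, ~~ leg h -> w (inv h) = - w h) ->
  \sum_(h | [&& endv h \in U, ~~ leg h & endv (inv h) \in U]) w h = 0.
Proof.
move=> w_inv; set S := (X in X = 0).
suff : S = - S by lia.
rewrite {1}/S (reindex_inj (inv_inj inv_invol)) /= -sumrN.
apply: eq_big => h; rewrite inv_invol is_leg_inv; first by rewrite andbCA andbA andbC.
by case/and3P => _ nleg _; rewrite w_inv.
Qed.

Lemma weighting_cut_sum w (U : {set V}) : weighting endv inv gen k w ->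
  \sum_(h | (endv h \in U) && leg h) w h + \sum_(h | leaves U h) w h
    + \sum_(x in U) k * kappa x = 0.
Proof.
move=> w_W; have [_ w_vert] := w_W.
have sum_at_U : \sum_(x in U) \sum_(h | endv h == x) w h = \sum_(h | endv h \in U) w h.
  rewrite [RHS](partition_big endv (mem U)) //=; apply: eq_bigr => x xU.
  by apply: eq_bigl => h; case: eqP => [->|]; rewrite ?xU ?andbF.
have split_at_U : \sum_(h | endv h \in U) w h = \sum_(h | (endv h \in U) && leg h) w h
    + (\sum_(h | [&& endv h \in U, ~~ leg h & endv (inv h) \in U]) w h
       + \sum_(h | leaves U h) w h).
  rewrite (bigID leg) /=; congr (_ + _).
  rewrite (bigID (fun h => endv (inv h) \in U)) /=.
  by congr (_ + _); apply: eq_bigl => h; rewrite /leaves andbA.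
have : \sum_(x in U) (\sum_(h | endv h == x) w h + k * kappa x) = 0.
  by apply: big1 => x _; exact: w_vert.
rewrite big_split /= sum_at_U split_at_U sum_inner_antisym_eq0 ?add0r // => h.
exact: weighting_inv.
Qed.

Definition weight_bound : int :=
  \sum_(x : V) `|k * kappa x| + \sum_(h | leg h) `|lw h|.

Lemma weight_bound_ge0 : 0 <= weight_bound.
Proof. by rewrite addr_ge0 // sumr_ge0. Qed.

Lemma leaves_sum_ge w (U : {set V}) :
  in_W w -> - weight_bound <= \sum_(h | leaves U h) w h.
Proof.
move=> [w_W w_legs]; have := weighting_cut_sum U w_W.
have legs_le : \sum_(h | (endv h \in U) && leg h) w h <= \sum_(h | leg h) `|lw h|.
  rewrite (eq_bigr lw) => [|h /andP [_ /w_legs] //].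
  by apply: ler_sum_norm_sub => h /andP [].
have kappa_le : \sum_(x in U) k * kappa x <= \sum_(x : V) `|k * kappa x|.
  exact: ler_sum_norm_sub.
rewrite /weight_bound; lia.
Qed.

Definition nonneg_step (w : H -> int) (t : edgeT inv -> rat) (h : H) : bool :=
  ~~ leg h && ((tval t h == 0) || (0 < w h)).

Lemma cycle_sum_gt0 w t h0 hs : (forall e, 0 <= t e) ->
  0 < w h0 -> tval t h0 != 0 -> all (nonneg_step w t) hs ->
  0 < \sum_(h <- h0 :: hs) (w h)%:~R * tval t h.
Proof.
move=> t_ge0 w0_gt0 t0_neq0 steps; rewrite big_cons ltr_pwDl //.
  by rewrite mulr_gt0 ?ltr0z // lt_def t0_neq0 (tval_ge0 t_ge0).
rewrite big_seq sumr_ge0 // => h /(allP steps) /andP [_ /orP [/eqP -> | w_gt0]].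
  by rewrite mulr0.
by rewrite mulr_ge0 ?(tval_ge0 t_ge0) // ler0z (ltW w_gt0).
Qed.

Lemma cone_weight_le w t h0 : in_W w -> cone endv w t ->
  ~~ leg h0 -> tval t h0 != 0 -> w h0 <= weight_bound.
Proof.
move=> w_in [t_ge0 cone_t] nleg0 t0_neq0; rewrite leNgt; apply/negP => w0_big.
have w0_gt0 : 0 < w h0 := le_lt_trans weight_bound_ge0 w0_big.
have w_inv h : ~~ leg h -> w (inv h) = - w h := weighting_inv w_in.1.
pose U := [set x | connect (step_rel (nonneg_step w t)) (endv (inv h0)) x].
have bad_inv0 : ~~ nonneg_step w t (inv h0).
  rewrite /nonneg_step is_leg_inv nleg0 tval_inv (negbTE t0_neq0) w_inv //.
  by rewrite oppr_gt0 -leNgt ltW.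
have h0_outside : endv h0 \notin U.
  rewrite inE; apply/negP.
  case/(cycle_of_connect _ nleg0 bad_inv0) => [h /andP [] // | hs steps cyc].
  by move: (cycle_sum_gt0 t_ge0 w0_gt0 t0_neq0 steps); rewrite cone_t ?ltxx.
have leaves_le0 h : leaves U h -> w h <= 0.
  case/and3P => hU nleg; rewrite leNgt; apply: contra => w_gt0.
  rewrite !inE in hU *; apply: connect_trans hU (connect1 _).
  by apply/existsP; exists h; rewrite /nonneg_step nleg w_gt0 orbT !eqxx.
have := leaves_sum_ge U w_in; rewrite (bigD1 (inv h0)) /=; last first.
  by rewrite /leaves inv_invol is_leg_inv nleg0 h0_outside inE connect0.
have : \sum_(h | leaves U h && (h != inv h0)) w h <= 0.
  by apply: sumr_le0 => h /andP [/leaves_le0].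
rewrite w_inv //; set rest := \sum_(i | _) _; lia.
Qed.

Lemma cone_weight_abs_le w t h : in_W w -> cone endv w t ->
  ~~ leg h -> tval t h != 0 -> `|w h| <= weight_bound.
Proof.
move=> w_in cone_t nleg t_neq0.
have le_h := cone_weight_le w_in cone_t nleg t_neq0.
have le_inv_h : w (inv h) <= weight_bound.
  by apply: (cone_weight_le w_in cone_t); rewrite ?is_leg_inv ?tval_inv.
rewrite (weighting_inv w_in.1 nleg) in le_inv_h; lia.
Qed.

Definition weight_key (w : H -> int) : {ffun H -> option 'I_(absz weight_bound).*2.+1} :=
  [ffun h => window (absz weight_bound) (w h)].

Lemma cone_weight_key w1 w2 (t : edgeT inv -> rat) :
  in_W w1 -> weight_key w1 = weight_key w2 -> cone endv w1 t -> cone endv w2 t.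
Proof.
move=> w1_in key_eq cone1; have [t_ge0 cone_t] := cone1; split=> // c cyc.
apply: etrans (cone_t c cyc); apply: eq_big_seq => h hc.
have nleg : ~~ leg h by case: c cyc hc => // h' c' [nleg_c _ _ _] /(allP nleg_c).
have [-> | t_neq0] := eqVneq (tval t h) 0; first by rewrite !mulr0.
congr (_%:~R * _); apply/esym/(@window_inj (absz weight_bound)).
  by rewrite gez0_abs ?weight_bound_ge0 // (cone_weight_abs_le w1_in cone1).
by have := congr1 (fun f : {ffun _} => f h) key_eq; rewrite !ffunE.
Qed.

End Graph.

Theorem lemma3p8 (V H : finType) (endv : H -> V) (inv : H -> H)
    (inv_invol : involutive inv) (gen : V -> nat) (k : int) (lw : H -> int)
    (Hconn : connected_graph endv inv)
    (Hlw : leg_weighted endv inv gen k lw) :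
  exists (n : nat) (cs : 'I_n -> ((edgeT inv -> rat) -> Prop)),
    forall w : H -> int, in_W endv inv gen k lw w ->
      exists i : 'I_n, forall t, @cone V H endv inv w t <-> cs i t.
Proof.
apply: (@finite_classes_of_key _ _ _ _ (@cone V H endv inv)
  (weight_key endv inv gen k lw)) => w1 w2 w1_in _ key_eq t.
exact: (cone_weight_key inv_invol w1_in key_eq).
Qed.
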